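(* Let $m\in\{2,3,\dots\}\cup\{\infty\}$, $\gamma\in(0,1)$, and let $T_n$ be uniformly distributed on $\mathsf{T}^{(m)}_n$. Let $A^\gamma_n$ be the set of trees $t\in\mathsf{T}^{(m)}_n$ having at least one vertex $v$ such that at least two of the subtrees rooted at children of $v$ are equal (as unordered rooted trees) and have at least $n^\gamma$ vertices. Then $\mathbb{P}(T_n\in A^\gamma_n)=O(\rho_m^{-n^\gamma}n^{5/2})$ as $n\to\infty$.
   Context: $\mathsf{T}^{(m)}_n$ is the set of rooted unordered trees with $n$ vertices in which every vertex has at most $m$ children. By Otter's theorem, $\#\mathsf{T}^{(m)}_n\sim\kappa_m\rho_m^nn^{-3/2}$ for constants $\kappa_m>0$, $\rho_m>1$. *)

From Stdlib Require Import Reals Lra Lia List Permutation ClassicalEpsilon.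
Import ListNotations.
Open Scope R_scope.

Inductive otree : Type := ONode : list otree -> otree.

Fixpoint osize (t : otree) : nat :=
  match t with ONode l => S (list_sum (map osize l)) end.

(* Isomorphism of rooted trees as UNORDERED trees: children lists agree up to
   a permutation, recursively. *)
Inductive oiso : otree -> otree -> Prop :=
  oiso_node (l1 l2 l3 : list otree) :
    Forall2 oiso l1 l3 -> Permutation l3 l2 -> oiso (ONode l1) (ONode l2).

Inductive subtree : otree -> otree -> Prop :=
  | st_refl t : subtree t t
  | st_child s c l : In c l -> subtree s c -> subtree s (ONode l).

(* Branching bound m in {2,3,...} ∪ {∞}: Some k = k, None = ∞. *)
Definition valid_m (m : option nat) : Prop :=
  m = None \/ exists k, m = Some k /\ (2 <= k)%nat.

Definition children_ok (m : option nat) (l : list otree) : Prop :=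
  match m with Some k => (length l <= k)%nat | None => True end.

(* t (an ordered representative) has n vertices and every vertex has at most m
   children.  The set T^(m)_n is the set of oiso-classes of such trees. *)
Definition Tm (m : option nat) (n : nat) (t : otree) : Prop :=
  osize t = n /\ forall l, subtree (ONode l) t -> children_ok m l.

(* [nclasses P k]: the predicate P (assumed oiso-invariant) contains exactly k
   oiso-classes: a list of k pairwise non-isomorphic elements of P meeting
   every class of P. *)
Definition nclasses (P : otree -> Prop) (k : nat) : Prop :=
  exists s : list otree, length s = k /\ Forall P s /\
    ForallOrdPairs (fun a b => ~ oiso a b) s /\
    forall t, P t -> exists u, In u s /\ oiso t u.

Definition ncl (P : otree -> Prop) : nat := epsilon (inhabits 0%nat) (nclasses P).

Definition cardT (m : option nat) (n : nat) : nat := ncl (Tm m n).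

Definition inA (gamma : R) (n : nat) (t : otree) : Prop :=
  exists l, subtree (ONode l) t /\
    exists i j, (i < j < length l)%nat /\
      oiso (nth i l (ONode nil)) (nth j l (ONode nil)) /\
      Rpower (INR n) gamma <= INR (osize (nth i l (ONode nil))).

Definition probA (m : option nat) (gamma : R) (n : nat) : R :=
  INR (ncl (fun t => Tm m n t /\ inA gamma n t)) / INR (cardT m n).

Definition otter_asymp (m : option nat) (kappa rho : R) : Prop :=
  Un_cv (fun n => INR (cardT m n) / (kappa * rho ^ n * Rpower (INR n) (-3/2))) 1.

From Stdlib Require Import Reals Lra Lia List Permutation ClassicalEpsilon Classical.
Import ListNotations.
Open Scope R_scope.

(* A tree in A^gamma_n has a vertex with two isomorphic children of some size
   k >= n^gamma.  Pruning both leaves a tree of size n - 2k; conversely the tree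
   is recovered, up to isomorphism, from the classes of the pruned tree and of the
   twin, together with the vertex where the twins are grafted back.  Hence
   #A^gamma_n <= sum_{k >= n^gamma} (n - 2k) #T_{n-2k} #T_k.  Otter's asymptotics
   give #T_j <= D rho^j for all j, so the sum is at most n D^2 rho^n times a
   geometric tail of order rho^(-n^gamma), while #T_n >= kappa rho^n n^(-3/2) / 2
   for large n. *)

Fixpoint otree_nested_ind (P : otree -> Prop)
  (H : forall l, Forall P l -> P (ONode l)) (t : otree) : P t :=
  match t with
  | ONode l => H l ((fix all l := match l return Forall P l with
      | [] => Forall_nil _
      | c :: l' => Forall_cons _ (otree_nested_ind P H c) (all l')
      end) l)
  end.

Lemma oiso_node_inv l1 l2 : oiso (ONode l1) (ONode l2) ->
  exists l3, Forall2 oiso l1 l3 /\ Permutation l3 l2.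
Proof. intro H; inversion H; subst; eauto. Qed.

Lemma oiso_refl t : oiso t t.
Proof.
  induction t as [l IH] using otree_nested_ind.
  apply oiso_node with l; [|apply Permutation_refl].
  induction IH; constructor; auto.
Qed.

Lemma Forall2_oiso_refl l : Forall2 oiso l l.
Proof. induction l; constructor; auto using oiso_refl. Qed.

Lemma oiso_sym t1 t2 : oiso t1 t2 -> oiso t2 t1.
Proof.
  revert t2; induction t1 as [l1 IH] using otree_nested_ind; intros [l2] H.
  destruct (oiso_node_inv _ _ H) as [l3 [F P]].
  assert (F' : Forall2 oiso l3 l1).
  { clear H P. induction F; constructor; inversion IH; subst; auto. }
  destruct (Permutation_Forall2 P F') as [l4 [P4 F4]].
  apply oiso_node with l4; auto using Permutation_sym.
Qed.

Lemma oiso_trans t1 t2 t3 : oiso t1 t2 -> oiso t2 t3 -> oiso t1 t3.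
Proof.
  revert t2 t3; induction t1 as [l1 IH] using otree_nested_ind.
  intros [l2] [l5] H H'.
  destruct (oiso_node_inv _ _ H) as [l3 [F P]].
  destruct (oiso_node_inv _ _ H') as [l4 [F' P']].
  destruct (Permutation_Forall2 (Permutation_sym P) F') as [l6 [P6 F6]].
  apply oiso_node with l6; [|exact (Permutation_trans (Permutation_sym P6) P')].
  clear H H' P P' F' P6. revert l6 F6.
  induction F; intros l6 F6; inversion F6; subst; constructor;
    inversion IH; subst; eauto.
Qed.

Lemma osize_oiso t1 t2 : oiso t1 t2 -> osize t1 = osize t2.
Proof.
  revert t2; induction t1 as [l1 IH] using otree_nested_ind; intros [l2] H.
  destruct (oiso_node_inv _ _ H) as [l3 [F P]]. simpl. f_equal.
  rewrite <- (Permutation_list_sum (Permutation_map osize P)).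
  clear P H. induction F; simpl; auto. inversion IH; subst. f_equal; auto.
Qed.

Lemma osize_pos t : (1 <= osize t)%nat.
Proof. destruct t; simpl; lia. Qed.

Lemma subtree_trans u v t : subtree u v -> subtree v t -> subtree u t.
Proof. intros H1 H2; induction H2; eauto using st_child. Qed.

Definition arity_ok (m : option nat) (t : otree) : Prop :=
  forall l, subtree (ONode l) t -> children_ok m l.

Lemma arity_ok_node m l : arity_ok m (ONode l) <-> children_ok m l /\ Forall (arity_ok m) l.
Proof.
  split.
  - intro H. split; [apply H, st_refl|].
    apply Forall_forall. intros c Hc l' Hs. apply H. eauto using st_child.
  - intros [H F] l' Hs. inversion Hs; subst; auto.
    rewrite Forall_forall in F. eapply F; eauto.
Qed.

Lemma arity_ok_subtree m u t : arity_ok m t -> subtree u t -> arity_ok m u.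
Proof. intros Ht Hu l Hl. eauto using subtree_trans. Qed.

Fixpoint modify_nth (i : nat) (g : otree -> otree) (l : list otree) : list otree :=
  match l, i with
  | [], _ => []
  | x :: l', O => g x :: l'
  | x :: l', S i' => x :: modify_nth i' g l'
  end.

Lemma modify_nth_length i g l : length (modify_nth i g l) = length l.
Proof. revert i; induction l; intros [|i]; simpl; f_equal; auto. Qed.

Lemma modify_nth_nth i g l : (i < length l)%nat ->
  nth i (modify_nth i g l) (ONode []) = g (nth i l (ONode [])).
Proof. revert i; induction l; intros [|i] Hi; simpl in *; try lia; auto with arith. Qed.

Lemma modify_nth_app g la c lb : modify_nth (length la) g (la ++ c :: lb) = la ++ g c :: lb.
Proof. induction la; simpl; f_equal; auto. Qed.

Lemma modify_nth_ext i g g' l : (forall x, g x = g' x) -> modify_nth i g l = modify_nth i g' l.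
Proof. revert i; induction l; intros [|i] E; simpl; f_equal; auto. Qed.

Lemma modify_nth_id i g l : g (nth i l (ONode [])) = nth i l (ONode []) -> modify_nth i g l = l.
Proof. revert i; induction l; intros [|i] E; simpl in *; f_equal; auto. Qed.

Lemma modify_nth_comp i f g l :
  modify_nth i f (modify_nth i g l) = modify_nth i (fun x => f (g x)) l.
Proof. revert i; induction l; intros [|i]; simpl; f_equal; auto. Qed.

Lemma osize_sum_modify_nth i g l : (i < length l)%nat ->
  (list_sum (map osize (modify_nth i g l)) + osize (nth i l (ONode []))
   = list_sum (map osize l) + osize (g (nth i l (ONode []))))%nat.
Proof.
  revert i; induction l; intros [|i] Hi; simpl in *; try lia.
  specialize (IHl i ltac:(lia)). lia.
Qed.

Fixpoint valid_path (p : list nat) (t : otree) : Prop :=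
  match p, t with
  | [], _ => True
  | i :: p', ONode l => (i < length l)%nat /\ valid_path p' (nth i l (ONode []))
  end.

Fixpoint subtree_at (p : list nat) (t : otree) : otree :=
  match p, t with
  | [], _ => t
  | i :: p', ONode l => subtree_at p' (nth i l (ONode []))
  end.

Fixpoint modify_at (p : list nat) (f : otree -> otree) (t : otree) : otree :=
  match p, t with
  | [], _ => f t
  | i :: p', ONode l => ONode (modify_nth i (modify_at p' f) l)
  end.

Lemma subtree_valid_path u t : subtree u t -> exists p, valid_path p t /\ subtree_at p t = u.
Proof.
  induction 1 as [|u c l Hc _ [p [V A]]]; [exists []; simpl; auto|].
  destruct (In_nth _ _ (ONode []) Hc) as [i [Hi Hn]].
  exists (i :: p); simpl; rewrite Hn; auto.
Qed.

Lemma modify_at_subtree_at p t : modify_at p (fun _ => subtree_at p t) t = t.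
Proof.
  revert t; induction p as [|i p IH]; intros [l]; simpl; auto.
  f_equal. apply modify_nth_id, IH.
Qed.

Lemma modify_at_comp p f g t : modify_at p f (modify_at p g t) = modify_at p (fun x => f (g x)) t.
Proof.
  revert t; induction p as [|i p IH]; intros [l]; simpl; auto.
  f_equal. rewrite modify_nth_comp. apply modify_nth_ext. auto.
Qed.

Lemma modify_at_oiso p f g t : (forall x, oiso (f x) (g x)) ->
  oiso (modify_at p f t) (modify_at p g t).
Proof.
  revert t; induction p as [|i p IH]; intros [l] E; simpl; auto.
  apply oiso_node with (modify_nth i (modify_at p g) l); [|apply Permutation_refl].
  revert i; induction l; intros [|i]; simpl; constructor; auto using oiso_refl, Forall2_oiso_refl.
Qed.

Lemma modify_at_valid p f t : valid_path p t -> valid_path p (modify_at p f t).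
Proof.
  revert t; induction p as [|i p IH]; intros [l] V; simpl in *; auto.
  destruct V as [Hi V]. rewrite modify_nth_length, modify_nth_nth; auto.
Qed.

Lemma osize_modify_at p v t : valid_path p t ->
  (osize (modify_at p (fun _ => v) t) + osize (subtree_at p t) = osize t + osize v)%nat.
Proof.
  revert t; induction p as [|i p IH]; intros [l] V; simpl in *; [lia|].
  destruct V as [Hi V]. specialize (IH _ V).
  pose proof (osize_sum_modify_nth i (modify_at p (fun _ => v)) l Hi). lia.
Qed.

Lemma arity_ok_modify_at m p v t : arity_ok m t -> arity_ok m v ->
  arity_ok m (modify_at p (fun _ => v) t).
Proof.
  revert t; induction p as [|i p IH]; intros [l] Ht Hv; simpl; auto.
  apply arity_ok_node in Ht as [C F]. apply arity_ok_node. split.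
  - unfold children_ok in *. destruct m; auto. rewrite modify_nth_length; auto.
  - clear C. revert i; induction F; intros [|i]; simpl; constructor; auto.
Qed.

Lemma modify_at_oiso_transfer (F : otree -> otree)
  (HF : forall u v, oiso u v -> oiso (F u) (F v)) p :
  forall t r, oiso t r -> valid_path p t ->
  exists q, valid_path q r /\ oiso (modify_at p F t) (modify_at q F r).
Proof.
  induction p as [|i p IH]; intros [l1] [l2] H V; simpl in *; [exists []; simpl; auto|].
  destruct V as [Hi V].
  destruct (oiso_node_inv _ _ H) as [l3 [Fo P]].
  destruct (nth_split l1 (ONode []) Hi) as [la [lb [E1 Ela]]].
  set (c := nth i l1 (ONode [])) in *. clearbody c. rewrite E1 in Fo.
  destruct (Forall2_app_inv_l _ _ Fo) as [l3a [[|c' l3b] [Fa [Fr E3]]]]; [inversion Fr|].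
  apply Forall2_cons_iff in Fr as [Hcc Fb]. subst l3.
  assert (Hin : In c' l2) by (eapply Permutation_in; eauto using in_elt).
  destruct (in_split _ _ Hin) as [l2a [l2b E2]]. subst l2.
  pose proof (Permutation_app_inv _ _ _ _ _ P) as P'.
  destruct (IH _ _ Hcc V) as [q [Vq Iq]].
  exists (length l2a :: q). split.
  - simpl. rewrite length_app, app_nth2, Nat.sub_diag by lia. simpl. split; [lia|auto].
  - simpl. rewrite E1, <- Ela, !modify_nth_app.
    apply oiso_node with (l3a ++ modify_at q F c' :: l3b).
    + apply Forall2_app; auto.
    + apply Permutation_elt; auto.
Qed.

Fixpoint paths_from (pf : otree -> list (list nat)) (k : nat) (l : list otree) :=
  match l with
  | [] => []
  | c :: l' => map (cons k) (pf c) ++ paths_from pf (S k) l'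
  end.

Fixpoint tree_paths (t : otree) : list (list nat) :=
  match t with ONode l => [] :: paths_from tree_paths 0 l end.

Lemma valid_path_In_tree_paths t p : valid_path p t -> In p (tree_paths t).
Proof.
  revert p; induction t as [l IH] using otree_nested_ind; intros [|i p] V; simpl in *; auto.
  right. destruct V as [Hi V].
  change i with (0 + i)%nat. generalize 0%nat as k. revert i Hi V.
  induction IH; intros i Hi V k; simpl in *; try lia.
  apply in_or_app. destruct i as [|i].
  - left. rewrite Nat.add_0_r. apply in_map. auto.
  - right. replace (k + S i)%nat with (S k + i)%nat by lia. apply IHIH; auto. lia.
Qed.

Lemma length_tree_paths t : length (tree_paths t) = osize t.
Proof.
  induction t as [l IH] using otree_nested_ind; simpl. f_equal.
  generalize 0%nat. induction IH; intro k; simpl; auto.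
  rewrite length_app, length_map, H, IHIH. auto.
Qed.

(** * Counting isomorphism classes *)

Lemma lists_bounded_finite {A : Type} (L : list A) N : exists LL, forall l,
  (length l <= N)%nat -> incl l L -> In l LL.
Proof.
  induction N as [|N [LL IH]].
  - exists [[]]. intros [|x l] Hl _; simpl in *; [auto|lia].
  - exists ([] :: flat_map (fun x => map (cons x) LL) L).
    intros [|x l] Hl Hin; simpl; [auto|right].
    apply in_flat_map. exists x. split; [apply Hin; simpl; auto|].
    apply in_map, IH; [simpl in *; lia|]. eapply incl_cons_inv, Hin.
Qed.

Lemma osize_In_le c l : In c l -> (osize c <= list_sum (map osize l))%nat.
Proof.
  induction l as [|a l IH]; simpl; [tauto|]. intros [<-|Hc]; [lia|].
  specialize (IH Hc); lia.
Qed.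

Lemma osize_subtree_le u t : subtree u t -> (osize u <= osize t)%nat.
Proof. induction 1 as [|u c l Hc _ IH]; simpl; [lia|]. pose proof (osize_In_le c l Hc); lia. Qed.

Lemma trees_bounded_finite n : exists L, forall t, (osize t <= n)%nat -> In t L.
Proof.
  induction n as [|n [L IH]].
  - exists []. intros t H. pose proof (osize_pos t); lia.
  - destruct (lists_bounded_finite L n) as [LL HLL].
    exists (map ONode LL). intros [l] H. simpl in H. apply in_map, HLL.
    + enough (length l <= list_sum (map osize l))%nat by lia.
      clear. induction l as [|c l IH]; simpl; auto. pose proof (osize_pos c); lia.
    + intros c Hc. apply IH. pose proof (osize_In_le c l Hc). lia.
Qed.

Lemma noniso_reps_exist (P : otree -> Prop) L : exists s, Forall P s /\
  ForallOrdPairs (fun a b => ~ oiso a b) s /\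
  forall t, P t -> (exists u, In u L /\ oiso t u) -> exists u, In u s /\ oiso t u.
Proof.
  induction L as [|b L [s [H1 [H2 H3]]]].
  - exists []. repeat constructor. intros t _ [u [[] _]].
  - destruct (classic (exists t, P t /\ oiso t b /\ ~ exists u, In u s /\ oiso t u))
      as [[t [Pt [Itb Nt]]]|N].
    + exists (t :: s). split; [constructor; auto|split].
      * constructor; auto. apply Forall_forall. intros x Hx Hi. apply Nt; eauto.
      * intros t0 P0 [u [[Hu|Hu] Hi]].
        -- subst u. exists t; split; simpl; eauto using oiso_trans, oiso_sym.
        -- destruct (H3 t0 P0) as [w [Hw Iw]]; eauto. exists w; simpl; auto.
    + exists s. split; [auto|split; [auto|]].
      intros t0 P0 [u [[Hu|Hu] Hi]]; [|apply H3; eauto].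
      subst u. apply NNPP. intro Hn. apply N. eauto.
Qed.

Lemma noniso_length_le s L : ForallOrdPairs (fun a b => ~ oiso a b) s ->
  (forall a, In a s -> exists b, In b L /\ oiso a b) -> (length s <= length L)%nat.
Proof.
  revert L; induction s as [|a s IH]; intros L H1 H2; simpl; [lia|].
  inversion H1 as [|a' s' Fa Fs]; subst.
  destruct (H2 a (or_introl eq_refl)) as [b [Hb Iab]].
  destruct (in_split _ _ Hb) as [L1 [L2 E]]. subst L.
  enough (length s <= length (L1 ++ L2))%nat by (rewrite !length_app in *; simpl; lia).
  apply IH; auto. intros a0 Ha0.
  destruct (H2 a0 (or_intror Ha0)) as [b0 [Hb0 I0]].
  exists b0. split; auto.
  apply in_app_or in Hb0 as [Hb0|[Hb0|Hb0]]; auto using in_or_app.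
  exfalso. subst b0. rewrite Forall_forall in Fa. apply (Fa a0 Ha0). eauto using oiso_trans, oiso_sym.
Qed.

Lemma nclasses_ncl P L : (forall t, P t -> In t L) -> nclasses P (ncl P).
Proof.
  intros H. unfold ncl. apply epsilon_spec.
  destruct (noniso_reps_exist P L) as [s [H1 [H2 H3]]].
  exists (length s), s. repeat split; auto.
  intros t Pt. apply H3; eauto using oiso_refl.
Qed.

Lemma ncl_le_cover P L0 L : (forall t, P t -> In t L0) ->
  (forall t, P t -> exists u, In u L /\ oiso t u) -> (ncl P <= length L)%nat.
Proof.
  intros H0 H. destruct (nclasses_ncl P L0 H0) as [s [Hl [F [O C]]]].
  rewrite <- Hl. apply noniso_length_le; auto.
  rewrite Forall_forall in F. auto.
Qed.

Lemma nclasses_Tm m n : nclasses (Tm m n) (cardT m n).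
Proof.
  destruct (trees_bounded_finite n) as [L HL].
  apply (nclasses_ncl _ L). intros t [E _]. apply HL. lia.
Qed.

Definition class_reps (m : option nat) (n : nat) : list otree :=
  proj1_sig (constructive_indefinite_description _ (nclasses_Tm m n)).

Lemma class_reps_spec m n : length (class_reps m n) = cardT m n /\
  Forall (Tm m n) (class_reps m n) /\
  forall t, Tm m n t -> exists u, In u (class_reps m n) /\ oiso t u.
Proof.
  unfold class_reps. destruct (constructive_indefinite_description _ _) as [s Hs]; simpl.
  destruct Hs as [? [? [_ ?]]]; auto.
Qed.

(** * Grafting twin subtrees *)

Definition graft_twins (s u : otree) : otree :=
  match u with ONode l => ONode (s :: s :: l) end.

Lemma graft_twins_oiso s s' u u' : oiso s s' -> oiso u u' ->
  oiso (graft_twins s u) (graft_twins s' u').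
Proof.
  destruct u as [lu], u' as [lu']; intros Hs Hu.
  destruct (oiso_node_inv _ _ Hu) as [l3 [F P]].
  apply oiso_node with (s' :: s' :: l3); auto.
Qed.

Lemma Permutation_two_out {A : Type} (l : list A) d i j : (i < j < length l)%nat ->
  exists l', Permutation l (nth i l d :: nth j l d :: l').
Proof.
  intros Hij.
  destruct (nth_split l d (ltac:(lia) : (i < length l)%nat)) as [la [lr [El Ela]]].
  assert (Hj : nth j l d = nth (j - S i) lr d).
  { rewrite El, app_nth2, Ela by lia. now replace (j - i)%nat with (S (j - S i)) by lia. }
  assert (Hlr : (j - S i < length lr)%nat).
  { rewrite El, length_app in Hij; simpl in Hij. lia. }
  destruct (nth_split lr d Hlr) as [lm [lb [Er _]]].
  rewrite Hj. exists (la ++ lm ++ lb).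
  set (s := nth i l d) in El |- *. set (s' := nth (j - S i) lr d) in Er |- *.
  rewrite El, Er.
  eapply Permutation_trans; [apply Permutation_sym, Permutation_middle|]. apply perm_skip.
  rewrite app_assoc. eapply Permutation_trans; [apply Permutation_sym, Permutation_middle|].
  now rewrite <- app_assoc.
Qed.

(* [r] is [t] with the twin children [nth i l] and [nth j l] removed. *)
Lemma prune_twin_children m t l i j : arity_ok m t -> subtree (ONode l) t ->
  (i < j < length l)%nat -> oiso (nth i l (ONode [])) (nth j l (ONode [])) ->
  exists p r, valid_path p r /\ arity_ok m r /\
    (osize r + 2 * osize (nth i l (ONode [])) = osize t)%nat /\
    oiso t (modify_at p (graft_twins (nth i l (ONode []))) r).
Proof.
  intros Ht Hsub Hij Hiso.
  destruct (Permutation_two_out l (ONode []) i j Hij) as [l' Pl].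
  set (s := nth i l (ONode [])) in *. set (s' := nth j l (ONode [])) in *.
  destruct (subtree_valid_path _ _ Hsub) as [p [Vp Ap]].
  exists p, (modify_at p (fun _ => ONode l') t). split; [|split; [|split]].
  - now apply modify_at_valid.
  - apply arity_ok_modify_at; [exact Ht|].
    destruct (proj1 (arity_ok_node m l) (arity_ok_subtree _ _ _ Ht Hsub)) as [Cl Fl].
    apply (Permutation_Forall Pl) in Fl. inversion Fl as [|? ? _ Fl']; subst.
    inversion Fl' as [|? ? _ Fl'']; subst.
    apply arity_ok_node. split; [|exact Fl''].
    unfold children_ok in *. destruct m; auto.
    apply Permutation_length in Pl; simpl in Pl; lia.
  - pose proof (osize_modify_at p (ONode l') t Vp) as Hsz. rewrite Ap in Hsz.
    assert (osize (ONode l) = osize (ONode l') + osize s + osize s')%nat.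
    { simpl. rewrite (Permutation_list_sum (Permutation_map osize Pl)). simpl. lia. }
    rewrite (osize_oiso _ _ Hiso) in *. lia.
  - rewrite modify_at_comp. rewrite <- (modify_at_subtree_at p t) at 1. rewrite Ap.
    apply modify_at_oiso. intros _. simpl.
    apply oiso_trans with (ONode (s :: s' :: l')).
    + apply oiso_node with l; [apply Forall2_oiso_refl|exact Pl].
    + apply oiso_node with (s :: s :: l'); [|apply Permutation_refl].
      repeat constructor; auto using oiso_refl, oiso_sym, Forall2_oiso_refl.
Qed.

Definition twin_grafts (m : option nat) (n k : nat) : list otree :=
  flat_map (fun r => flat_map (fun q =>
      map (fun s => modify_at q (graft_twins s) r) (class_reps m k))
    (tree_paths r)) (class_reps m (n - 2 * k)).

Lemma twin_grafts_cover m n t l i j : Tm m n t -> subtree (ONode l) t ->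
  (i < j < length l)%nat -> oiso (nth i l (ONode [])) (nth j l (ONode [])) ->
  exists u, In u (twin_grafts m n (osize (nth i l (ONode [])))) /\ oiso t u.
Proof.
  intros [Hn Ht] Hsub Hij Hiso.
  destruct (prune_twin_children m t l i j Ht Hsub Hij Hiso) as [p [r [Vp [Hr [Hsz It]]]]].
  set (s := nth i l (ONode [])) in *. set (k := osize s) in *.
  assert (Hs : subtree s (ONode l)) by (apply st_child with s; [apply nth_In; lia|apply st_refl]).
  destruct (proj2 (proj2 (class_reps_spec m k)) s) as [s0 [Hs0 Is0]].
  { split; [reflexivity|]. apply (arity_ok_subtree _ _ _ Ht), (subtree_trans _ _ _ Hs Hsub). }
  destruct (proj2 (proj2 (class_reps_spec m (n - 2 * k))) r) as [r0 [Hr0 Ir]].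
  { split; [lia|exact Hr]. }
  destruct (modify_at_oiso_transfer (graft_twins s0)
    (fun u v => graft_twins_oiso s0 s0 u v (oiso_refl s0)) p r r0 Ir Vp) as [q [Vq Iq]].
  exists (modify_at q (graft_twins s0) r0). split.
  - apply in_flat_map. exists r0. split; [exact Hr0|].
    apply in_flat_map. exists q. split; [now apply valid_path_In_tree_paths|].
    now apply (in_map (fun s1 => modify_at q (graft_twins s1) r0)).
  - apply (oiso_trans _ _ _ It), (oiso_trans _ (modify_at p (graft_twins s0) r)), Iq.
    apply modify_at_oiso. intros u. apply graft_twins_oiso; auto using oiso_refl.
Qed.

Lemma length_flat_map_le {A B : Type} (g : A -> list B) l c :
  (forall a, In a l -> (length (g a) <= c)%nat) -> (length (flat_map g l) <= length l * c)%nat.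
Proof.
  induction l as [|a l IH]; simpl; intros H; [lia|]. rewrite length_app.
  pose proof (H a (or_introl eq_refl)). specialize (IH (fun b Hb => H b (or_intror Hb))). lia.
Qed.

Lemma length_twin_grafts m n k :
  (length (twin_grafts m n k) <= (n - 2 * k) * cardT m (n - 2 * k) * cardT m k)%nat.
Proof.
  destruct (class_reps_spec m (n - 2 * k)) as [L1 [F1 _]].
  destruct (class_reps_spec m k) as [L2 _].
  rewrite <- L1, <- L2.
  replace (_ * _ * _)%nat with (length (class_reps m (n - 2 * k)) *
    ((n - 2 * k) * length (class_reps m k)))%nat by lia.
  apply length_flat_map_le. intros r Hr.
  rewrite Forall_forall in F1. destruct (F1 r Hr) as [Er _].
  rewrite <- Er, <- length_tree_paths.
  apply length_flat_map_le. intros q _. now rewrite length_map.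
Qed.

Definition sumR (l : list R) : R := fold_right Rplus 0 l.

Lemma sumR_map_le {A : Type} (f g : A -> R) l : (forall a, In a l -> f a <= g a) ->
  sumR (map f l) <= sumR (map g l).
Proof.
  induction l as [|a l IH]; simpl; intros H; [lra|].
  pose proof (H a (or_introl eq_refl)). specialize (IH (fun b Hb => H b (or_intror Hb))). lra.
Qed.

Lemma sumR_map_nonneg {A : Type} (f : A -> R) l : (forall a, 0 <= f a) -> 0 <= sumR (map f l).
Proof. intros H; induction l as [|a l IH]; simpl; [lra|]. specialize (H a); lra. Qed.

Lemma sumR_map_In_le {A : Type} (f : A -> R) l a : (forall b, 0 <= f b) -> In a l ->
  f a <= sumR (map f l).
Proof.
  intros H Ha. induction l as [|b l IH]; simpl in *; [tauto|].
  pose proof (sumR_map_nonneg f l H). specialize (H b).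
  destruct Ha as [<-|Ha]; [|specialize (IH Ha)]; lra.
Qed.

Lemma sumR_map_scal {A : Type} c (f : A -> R) l :
  sumR (map (fun a => c * f a) l) = c * sumR (map f l).
Proof. induction l; simpl; [ring|]. rewrite IHl; ring. Qed.

Lemma INR_length_flat_map {A B : Type} (g : A -> list B) l :
  INR (length (flat_map g l)) = sumR (map (fun a => INR (length (g a))) l).
Proof. induction l; simpl; auto. rewrite length_app, plus_INR, IHl; auto. Qed.

Definition twin_bound (m : option nat) (x : R) (n : nat) : R :=
  sumR (map (fun k => if Rle_dec x (INR k)
    then INR (n - 2 * k) * INR (cardT m (n - 2 * k)) * INR (cardT m k) else 0) (seq 0 (S n))).

Lemma ncl_inA_le m gamma n :
  INR (ncl (fun t => Tm m n t /\ inA gamma n t)) <= twin_bound m (Rpower (INR n) gamma) n.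
Proof.
  set (x := Rpower (INR n) gamma).
  set (L := flat_map (fun k => if Rle_dec x (INR k) then twin_grafts m n k else [])
              (seq 0 (S n))).
  apply Rle_trans with (INR (length L)).
  - apply le_INR. destruct (trees_bounded_finite n) as [L0 HL0].
    apply (ncl_le_cover _ L0).
    { intros t [[E _] _]. apply HL0. lia. }
    intros t [Ht [l [Hsub [i [j [Hij [Hiso Hx]]]]]]].
    destruct (twin_grafts_cover m n t l i j Ht Hsub Hij Hiso) as [u [Hu Iu]].
    exists u. split; [|exact Iu]. apply in_flat_map.
    exists (osize (nth i l (ONode []))). split.
    + apply in_seq. destruct Ht as [<- _].
      enough (osize (nth i l (ONode [])) <= osize t)%nat by lia.
      assert (Hi : (i < length l)%nat) by lia.
      exact (osize_subtree_le _ _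
        (subtree_trans _ _ _ (st_child _ _ _ (nth_In l _ Hi) (st_refl _)) Hsub)).
    + destruct (Rle_dec x _) as [_|N]; [exact Hu|contradiction].
  - unfold L, twin_bound. rewrite INR_length_flat_map. apply sumR_map_le. intros k _.
    destruct (Rle_dec x (INR k)); [|simpl; lra].
    rewrite <- !mult_INR. apply le_INR, length_twin_grafts.
Qed.

(** * Estimates *)

Lemma Rpower_pos x y : 0 < Rpower x y.
Proof. apply exp_pos. Qed.

Lemma geometric_tail_le rho x : 1 < rho -> forall N a,
  sumR (map (fun k => if Rle_dec x (INR k) then Rpower rho (- INR k) else 0) (seq a N))
  <= rho / (rho - 1) * Rpower rho (- Rmax x (INR a)).
Proof.
  intros Hr. assert (Hc : 0 < rho / (rho - 1)) by (apply Rdiv_lt_0_compat; lra).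
  induction N as [|N IH]; intro a; simpl.
  - pose proof (Rpower_pos rho (- Rmax x (INR a))). nra.
  - specialize (IH (S a)). rewrite S_INR in IH.
    destruct (Rle_dec x (INR a)) as [Hxa|Hxa].
    + rewrite Rmax_right in IH by lra. rewrite Rmax_right by lra.
      replace (- (INR a + 1)) with (- INR a + - (1)) in IH by ring.
      rewrite Rpower_plus, (Rpower_Ropp rho 1), Rpower_1 in IH by lra.
      set (P := Rpower rho (- INR a)) in *.
      assert (E : P + rho / (rho - 1) * (P * / rho) = rho / (rho - 1) * P) by (field; lra).
      lra.
    + rewrite (Rmax_left x (INR a)) by lra.
      assert (Hmax : Rpower rho (- Rmax x (INR a + 1)) <= Rpower rho (- x)).
      { apply Rle_Rpower; [lra|]. pose proof (Rmax_l x (INR a + 1)); lra. }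
      apply Rmult_le_compat_l with (r := rho / (rho - 1)) in Hmax; lra.
Qed.

Lemma twin_term_le m D rho n k : 1 < rho -> 0 <= D ->
  (forall j, INR (cardT m j) <= D * rho ^ j) ->
  INR (n - 2 * k) * INR (cardT m (n - 2 * k)) * INR (cardT m k)
  <= INR n * D ^ 2 * rho ^ n * Rpower rho (- INR k).
Proof.
  intros Hr HD HT. pose proof (Rpower_pos rho (- INR k)).
  pose proof (pow_lt rho n ltac:(lra)).
  assert (HRHS : 0 <= INR n * D ^ 2 * rho ^ n * Rpower rho (- INR k)).
  { pose proof (pos_INR n). pose proof (pow2_ge_0 D).
    apply Rmult_le_pos; [apply Rmult_le_pos; [apply Rmult_le_pos|]|]; lra. }
  destruct (Nat.le_gt_cases (2 * k) n) as [H2k|H2k];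
    [|replace (n - 2 * k)%nat with 0%nat by lia; simpl; lra].
  assert (Hpow : rho ^ (n - 2 * k) * rho ^ k = rho ^ n * Rpower rho (- INR k)).
  { rewrite Rpower_Ropp, Rpower_pow by lra.
    replace n with (n - 2 * k + k + k)%nat at 2 by lia. rewrite !pow_add.
    field. apply pow_nonzero; lra. }
  apply Rle_trans with (INR n * (D * rho ^ (n - 2 * k)) * (D * rho ^ k)).
  - apply Rmult_le_compat; [apply Rmult_le_pos; apply pos_INR|apply pos_INR| |apply HT].
    apply Rmult_le_compat; [apply pos_INR|apply pos_INR|apply le_INR; lia|apply HT].
  - replace (INR n * (D * rho ^ (n - 2 * k)) * (D * rho ^ k))
      with (INR n * D ^ 2 * (rho ^ (n - 2 * k) * rho ^ k)) by ring.
    rewrite Hpow. lra.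
Qed.

Lemma twin_bound_le m D rho x n : 1 < rho -> 0 <= D -> 0 < x ->
  (forall j, INR (cardT m j) <= D * rho ^ j) ->
  twin_bound m x n <= INR n * D ^ 2 * rho ^ n * (rho / (rho - 1) * Rpower rho (- x)).
Proof.
  intros Hr HD Hx HT. unfold twin_bound.
  eapply Rle_trans.
  - apply (sumR_map_le _ (fun k => INR n * D ^ 2 * rho ^ n *
      (if Rle_dec x (INR k) then Rpower rho (- INR k) else 0))).
    intros k _. destruct (Rle_dec x (INR k)); [apply twin_term_le; auto|lra].
  - rewrite sumR_map_scal. apply Rmult_le_compat_l.
    + pose proof (pos_INR n). pose proof (pow2_ge_0 D). pose proof (pow_lt rho n ltac:(lra)).
      apply Rmult_le_pos; [apply Rmult_le_pos|]; lra.
    + pose proof (geometric_tail_le rho x Hr (S n) 0) as G. simpl INR in G.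
      rewrite Rmax_left in G by lra. exact G.
Qed.

Lemma Rdiv_near_1 a d : 0 < d -> R_dist (a / d) 1 < 1 / 2 -> d / 2 <= a <= 3 / 2 * d.
Proof.
  intros Hd H. unfold R_dist in H. apply Rabs_def2 in H.
  assert (E : a = a / d * d) by (field; lra). rewrite E. nra.
Qed.

Lemma otter_scale_pos kappa rho n : 0 < kappa -> 1 < rho ->
  0 < kappa * rho ^ n * Rpower (INR n) (-3/2).
Proof.
  intros Hk Hr. pose proof (Rpower_pos (INR n) (-3/2)). pose proof (pow_lt rho n ltac:(lra)).
  apply Rmult_lt_0_compat; [apply Rmult_lt_0_compat|]; lra.
Qed.

Lemma otter_lower_bound m kappa rho : 0 < kappa -> 1 < rho -> otter_asymp m kappa rho ->
  exists N, forall n, (N <= n)%nat ->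
    kappa * rho ^ n * Rpower (INR n) (-3/2) / 2 <= INR (cardT m n).
Proof.
  intros Hk Hr Hot. destruct (Hot (1/2) ltac:(lra)) as [N HN]. exists N. intros n Hn.
  exact (proj1 (Rdiv_near_1 _ _ (otter_scale_pos kappa rho n Hk Hr) (HN n Hn))).
Qed.

Lemma Rpower_INR_nonpos_le_1 n y : y <= 0 -> Rpower (INR n) y <= 1.
Proof.
  intros Hy. destruct n as [|n].
  - simpl. unfold Rpower, ln. destruct (Rlt_dec 0 0) as [r|r]; [destruct (Rlt_irrefl 0 r)|].
    rewrite Rmult_0_r, exp_0. lra.
  - rewrite <- (Rpower_O (INR (S n))) by (rewrite S_INR; pose proof (pos_INR n); lra).
    apply Rle_Rpower; [rewrite S_INR; pose proof (pos_INR n); lra|exact Hy].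
Qed.

Lemma otter_exponential_bound m kappa rho : 0 < kappa -> 1 < rho ->
  otter_asymp m kappa rho -> exists D, 0 <= D /\ forall j, INR (cardT m j) <= D * rho ^ j.
Proof.
  intros Hk Hr Hot. destruct (Hot (1/2) ltac:(lra)) as [N HN].
  set (M := sumR (map (fun j => INR (cardT m j)) (seq 0 N))).
  assert (HM : 0 <= M) by (apply sumR_map_nonneg; intro; apply pos_INR).
  exists (3/2 * kappa + M). split; [lra|]. intro j.
  assert (Hpow : 1 <= rho ^ j) by (apply pow_R1_Rle; lra).
  destruct (Nat.lt_ge_cases j N) as [Hj|Hj].
  - assert (INR (cardT m j) <= M).
    { apply (sumR_map_In_le (fun j => INR (cardT m j))); [intro; apply pos_INR|].
      apply in_seq; lia. }
    nra.
  - pose proof (Rdiv_near_1 _ _ (otter_scale_pos kappa rho j Hk Hr) (HN j Hj)) as [_ Hup].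
    pose proof (Rpower_INR_nonpos_le_1 j (-3/2) ltac:(lra)). pose proof (Rpower_pos (INR j) (-3/2)).
    assert (kappa * rho ^ j * Rpower (INR j) (-3/2) <= kappa * rho ^ j * 1)
      by (apply Rmult_le_compat_l; nra).
    nra.
Qed.

Theorem lemma24 (m : option nat) (gamma kappa rho : R) :
  valid_m m -> 0 < gamma < 1 ->
  0 < kappa -> 1 < rho -> otter_asymp m kappa rho ->
  exists C : R, exists N : nat, forall n : nat, (N <= n)%nat ->
    probA m gamma n <=
      C * Rpower rho (- Rpower (INR n) gamma) * Rpower (INR n) (5/2).
Proof.
  intros _ _ Hk Hr Hot.
  destruct (otter_lower_bound m kappa rho Hk Hr Hot) as [N HN].
  destruct (otter_exponential_bound m kappa rho Hk Hr Hot) as [D [HD HT]].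
  exists (2 * D ^ 2 * (rho / (rho - 1)) / kappa), (Nat.max N 1). intros n Hn.
  set (x := Rpower (INR n) gamma).
  assert (Hn1 : 1 <= INR n) by (apply (le_INR 1); lia).
  pose proof (Rpower_pos (INR n) (3/2)). pose proof (pow_lt rho n ltac:(lra)).
  assert (Hlow := HN n ltac:(lia)).
  assert (Hup := Rle_trans _ _ _ (ncl_inA_le m gamma n)
                   (twin_bound_le m D rho x n Hr HD (Rpower_pos _ _) HT)).
  pose proof (otter_scale_pos kappa rho n Hk Hr) as Hscale.
  unfold probA, Rdiv. eapply Rle_trans.
  - apply Rmult_le_compat; [apply pos_INR|left; apply Rinv_0_lt_compat; lra|exact Hup|].
    apply Rinv_le_contravar, Hlow. lra.
  - right.
    replace (-3/2) with (- (3/2)) by lra. rewrite (Rpower_Ropp (INR n) (3/2)).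
    replace (5 * / 2) with (1 + 3/2) by lra. rewrite Rpower_plus, Rpower_1 by lra.
    field. repeat split; lra.
Qed.
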